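(* Let $G=(V,w,m)$ be a locally finite weighted graph having the hypercube shell structure $HSS(N,W,x_0)$ for some $N,W>0$ and $x_0\in V$. Then for every integer $n\ge0$, $$m(S_n(x_0))=m(x_0)\binom Nn,$$ where $m(A)=\sum_{x\in A}m(x)$ and $\binom Nn=\frac{N(N-1)\cdots(N-n+1)}{n!}$.
   Context: A weighted graph is $G=(V,w,m)$ with $V$ countable, $w:V\times V\to[0,\infty)$ symmetric with $w(x,x)=0$, $m:V\to(0,\infty)$; $x\sim y$ iff $w(x,y)>0$. $\operatorname{Deg}(x)=\frac1{m(x)}\sum_yw(x,y)$. $d$ is the combinatorial distance, $S_n(x)=\{y:d(x,y)=n\}$. $d_-^{x_0}(z)=\sum_{y\sim z,\ d(y,x_0)<d(z,x_0)}\frac{w(y,z)}{m(z)}$. $HSS(N,W,x_0)$: (i) $\operatorname{Deg}(x)=NW$ for all $x\in V$; (ii) $G$ is bipartite; (iii) $d_-^{x_0}(x)=W\,d(x,x_0)$ for all $x\in V$. *)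

From HB Require Import structures.
From mathcomp Require Import all_boot all_order all_algebra.
From Stdlib Require Import ClassicalEpsilon.
Set Implicit Arguments. Unset Strict Implicit. Unset Printing Implicit Defensive.
Import Order.TTheory GRing.Theory Num.Theory.
Local Open Scope ring_scope.

Section WG.
Variables (R : realFieldType) (V : countType).

(* Sum of f over the set {x | P x}, assumed finite: picks (classically) a
   duplicate-free enumeration of P (meaningless if P is infinite). *)
Definition finsum (P : V -> Prop) (f : V -> R) : R :=
  let s := epsilon (inhabits [::])
             (fun s : seq V => uniq s /\ forall x, x \in s <-> P x) in
  \sum_(x <- s) f x.

Variables (w : V -> V -> R) (m : V -> R).

Definition adj : rel V := fun x y => 0 < w x y.

Definition weighted_graph : Prop :=
  (forall x y, w x y = w y x) /\ (forall x y, 0 <= w x y) /\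
  (forall x, w x x = 0) /\ (forall x, 0 < m x).

Definition locally_finite : Prop :=
  forall x, exists s : seq V, forall y, adj x y -> y \in s.

Definition walk (x y : V) (n : nat) : Prop :=
  exists p : seq V, size p = n /\ path adj x p /\ last x p = y.

Definition dist (x y : V) (n : nat) : Prop :=
  walk x y n /\ forall k, (k < n)%N -> ~ walk x y k.

(* Deg(x) = (1/m(x)) sum_y w(x,y)  (sum over neighbours; other terms vanish) *)
Definition Deg (x : V) : R := (finsum (fun y => adj x y) (fun y => w x y)) / m x.

Definition dminus (x0 z : V) : R :=
  finsum (fun y => adj y z /\ exists k n, dist y x0 k /\ dist z x0 n /\ (k < n)%N)
         (fun y => w y z / m z).

Definition bipartite : Prop :=
  exists c : V -> bool, forall x y, adj x y -> c x != c y.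

Definition HSS (N W : R) (x0 : V) : Prop :=
  (forall x, Deg x = N * W) /\ bipartite /\
  (forall x, exists n : nat, dist x x0 n /\ dminus x0 x = W * n%:R).

Definition mS (x0 : V) (n : nat) : R := finsum (fun x => dist x x0 n) m.

End WG.

Definition gbinom (R : realFieldType) (N : R) (n : nat) : R :=
  (\prod_(i < n) (N - i%:R)) / (n`!)%:R.

From HB Require Import structures.
From mathcomp Require Import all_boot all_order all_algebra.
From Stdlib Require Import ClassicalEpsilon.
From mathcomp Require Import zify ring.
Import Order.TTheory GRing.Theory Num.Theory.
Local Open Scope ring_scope.
Set Implicit Arguments. Unset Strict Implicit. Unset Printing Implicit Defensive.

(* Bipartiteness forces adjacent vertices into consecutive shells, so every
   edge leaving S_n lands in S_(n+1).  Counting the total weight of the edges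
   between S_n and S_(n+1) from both sides, with Deg = N W and d_- = W d, gives
   W (N - n) m(S_n) = W (n+1) m(S_(n+1)), which is the recurrence of the
   binomial coefficients. *)

Definition enumerates (V : eqType) (s : seq V) (P : V -> Prop) : Prop :=
  uniq s /\ forall x, x \in s <-> P x.

Lemma finsumE (R : realFieldType) (V : countType) (P : V -> Prop) (f : V -> R)
    (s : seq V) :
  enumerates s P -> finsum P f = \sum_(x <- s) f x.
Proof.
move=> [us hs]; rewrite /finsum; cbv zeta.
set Q := fun s : seq V => uniq s /\ (forall x, x \in s <-> P x).
have [us' hs'] : Q (epsilon (inhabits [::]) Q) by apply: epsilon_spec; exists s.
apply: perm_big; apply: uniq_perm => // x.
by apply/idP/idP => [/hs' /hs|/hs /hs'].
Qed.

Lemma big_uniq_filter_eq (R : realFieldType) (V : eqType) (s1 s2 : seq V)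
    (P1 P2 : pred V) (f : V -> R) :
  uniq s1 -> uniq s2 -> (forall x, (x \in s1) && P1 x = (x \in s2) && P2 x) ->
  \sum_(x <- s1 | P1 x) f x = \sum_(x <- s2 | P2 x) f x.
Proof.
move=> u1 u2 h; rewrite -big_filter -[RHS]big_filter; apply: perm_big.
apply: uniq_perm; rewrite ?filter_uniq // => x.
by rewrite !mem_filter [P1 x && _]andbC h andbC.
Qed.

Lemma gbinomS (R : realFieldType) (N : R) (n : nat) :
  gbinom N n.+1 * n.+1%:R = gbinom N n * (N - n%:R).
Proof.
have nfact_neq0 k : (k`!)%:R != 0 :> R by rewrite pnatr_eq0 -lt0n fact_gt0.
rewrite /gbinom big_ord_recr /= factS natrM.
by field; rewrite nfact_neq0 addrC natr1 pnatr_eq0.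
Qed.

Lemma gbinom_recurrence (R : realFieldType) (N : R) (a : nat -> R) :
  (forall n, a n.+1 * n.+1%:R = a n * (N - n%:R)) ->
  forall n, a n = a 0%N * gbinom N n.
Proof.
move=> rec; elim=> [|n IH]; first by rewrite /gbinom big_ord0 fact0 divr1 mulr1.
have n1_neq0 : n.+1%:R != 0 :> R by rewrite pnatr_eq0.
by apply: (mulIf n1_neq0); rewrite -mulrA gbinomS rec IH [RHS]mulrA.
Qed.

Section Walks.
Variables (R : realFieldType) (V : countType) (w : V -> V -> R).

Lemma walk0P x y : walk w x y 0 -> x = y.
Proof. by move=> [[|z p] [//= _ [_ lp]]]. Qed.

Lemma walkS x y z n : adj w x z -> walk w z y n -> walk w x y n.+1.
Proof.
move=> hxz [p [sp [pp lp]]]; exists (z :: p); split; first by rewrite /= sp.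
by split => //=; rewrite hxz pp.
Qed.

Lemma walkSP x y n : walk w x y n.+1 -> exists2 z, adj w x z & walk w z y n.
Proof.
move=> [[|z p] [//= sp [/andP[hxz pp] lp]]].
by exists z => //; exists p; case: sp.
Qed.

Lemma walk_parity (c : V -> bool) :
  (forall a b, adj w a b -> c a != c b) ->
  forall n x y, walk w x y n -> c y = odd n (+) c x.
Proof.
move=> hc; elim=> [|n IH] x y; first by move/walk0P => ->.
move/walkSP=> [z hxz /IH ->]; move: (hc _ _ hxz).
by rewrite /=; case: (c x); case: (c z); case: (odd n).
Qed.

Lemma dist_unique x y a b : dist w x y a -> dist w x y b -> a = b.
Proof.
move=> [wa ha] [wb hb]; case: (ltngtP a b) => // h.
  by case: (hb _ h wa).
by case: (ha _ h wb).
Qed.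

End Walks.

Section Shells.
Variables (R : realFieldType) (V : countType) (w : V -> V -> R) (m : V -> R).
Variables (x0 : V) (d : V -> nat) (c : V -> bool).
Hypothesis w_sym : forall x y, w x y = w y x.
Hypothesis w_ge0 : forall x y, 0 <= w x y.
Hypothesis m_gt0 : forall x, 0 < m x.
Hypothesis c_proper : forall x y, adj w x y -> c x != c y.
Hypothesis loc_fin : locally_finite w.
Hypothesis dist_d : forall x, dist w x x0 (d x).

Lemma adjC x y : adj w x y = adj w y x.
Proof. by rewrite /adj w_sym. Qed.

Lemma w_nadj x y : ~~ adj w x y -> w x y = 0.
Proof. by move=> h; apply/eqP; rewrite eq_le w_ge0 andbT leNgt. Qed.

Lemma distE x k : dist w x x0 k <-> k = d x.
Proof. by split => [h|->//]; apply: dist_unique h (dist_d x). Qed.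

Lemma d_le_walk x k : walk w x x0 k -> (d x <= k)%N.
Proof. by move=> hw; rewrite leqNgt; apply/negP => /(dist_d x).2; apply. Qed.

Lemma d_eq0 x : d x = 0%N <-> x = x0.
Proof.
split=> [h|->]; first by have := (dist_d x).1; rewrite h => /walk0P.
by apply/esym/distE; split; [exists [::]|].
Qed.

(* Adjacent vertices have distances differing by at most one, and by
   bipartiteness (parity of walks) not by zero. *)
Lemma d_adj y z : adj w y z -> d y = (d z).+1 \/ d z = (d y).+1.
Proof.
move=> hyz.
have := d_le_walk (walkS hyz (dist_d z).1).
have : (d z <= (d y).+1)%N by apply/d_le_walk/(walkS _ (dist_d y).1); rewrite adjC.
have : d y <> d z.
  have c_y := walk_parity c_proper (dist_d y).1.
  have c_z := walk_parity c_proper (dist_d z).1.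
  move=> e; move: (c_proper hyz) c_z; rewrite c_y e.
  by case: (c y); case: (c z); case: (odd _).
lia.
Qed.

Lemma nbrs_spec x : {s : seq V | enumerates s (adj w x)}.
Proof.
apply: constructive_indefinite_description.
have [s hs] := loc_fin x; exists (filter (adj w x) (undup s)).
split; first by rewrite filter_uniq ?undup_uniq.
move=> y; rewrite mem_filter mem_undup; split => [/andP[]//|h].
by rewrite h (hs _ h).
Qed.

Let nbrs x := sval (nbrs_spec x).

Lemma nbrs_uniq x : uniq (nbrs x).
Proof. exact: (svalP (nbrs_spec x)).1. Qed.

Lemma mem_nbrs x y : y \in nbrs x <-> adj w x y.
Proof. exact: (svalP (nbrs_spec x)).2. Qed.

Lemma shell0 : enumerates [:: x0] (fun x => d x = 0%N).
Proof. by split=> // x; rewrite inE; split=> [/eqP ->|/d_eq0 ->]; [apply/d_eq0|]. Qed.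

Lemma shell_enumerable n : exists s, enumerates s (fun x => d x = n).
Proof.
elim: n => [|n [s [us hs]]]; first by exists [:: x0]; exact: shell0.
exists (undup (filter (fun y => d y == n.+1) (flatten (map nbrs s)))).
split=> [|y]; first exact: undup_uniq.
rewrite mem_undup mem_filter; split => [/andP[/eqP]//|h].
rewrite h eqxx /=; apply/flattenP.
have := (dist_d y).1; rewrite h => /walkSP [z hyz /d_le_walk hz].
exists (nbrs z); first by apply/mapP; exists z => //; apply/hs; case: (d_adj hyz); lia.
by apply/mem_nbrs; rewrite adjC.
Qed.

Lemma mS_shell n s :
  enumerates s (fun x => d x = n) -> mS w m x0 n = \sum_(x <- s) m x.
Proof.
move=> [us hs]; apply: finsumE; split=> // x.
by rewrite hs; split => [<-|/distE].
Qed.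

Lemma sum_nbrs_Deg z : \sum_(y <- nbrs z) w z y = m z * Deg w m z.
Proof.
rewrite /Deg (finsumE _ (svalP (nbrs_spec z))) mulrC divfK //.
by rewrite gt_eqF.
Qed.

Lemma sum_nbrs_dminus z :
  \sum_(y <- nbrs z | (d y < d z)%N) w z y = m z * dminus w m x0 z.
Proof.
rewrite /dminus (@finsumE _ _ _ _ [seq y <- nbrs z | (d y < d z)%N]).
  rewrite -mulr_suml big_filter mulrC divfK ?gt_eqF //.
  by apply: eq_bigr => y _; rewrite w_sym.
split=> [|y]; first by rewrite filter_uniq ?nbrs_uniq.
rewrite mem_filter; split.
  by move=> /andP[hl /mem_nbrs ha]; rewrite adjC; split=> //; exists (d y), (d z).
move=> [ha [k [n' [/distE -> [/distE -> ->]]]]].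
by apply/mem_nbrs; rewrite adjC.
Qed.

Lemma sum_nbrs_up z s :
  enumerates s (fun x => d x = (d z).+1) ->
  \sum_(y <- nbrs z | ~~ (d y < d z)%N) w z y = \sum_(y <- s) w z y.
Proof.
move=> [us hs].
rewrite [RHS](bigID (adj w z)) /= [X in _ = _ + X]big1 ?addr0; last first.
  by move=> y; apply: w_nadj.
apply: big_uniq_filter_eq; rewrite ?nbrs_uniq // => y.
apply/andP/andP => [[/mem_nbrs ha hl]|[/hs hy ha]].
  by split=> //; apply/hs; case: (d_adj ha); lia.
by split; [apply/mem_nbrs | lia].
Qed.

Lemma sum_nbrs_down y s :
  enumerates s (fun x => (d x).+1 = d y) ->
  \sum_(z <- s) w z y = \sum_(z <- nbrs y | (d z < d y)%N) w y z.
Proof.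
move=> [us hs].
rewrite [LHS](bigID (adj w y)) /= [X in _ + X = _]big1 ?addr0; last first.
  by move=> z hz; rewrite w_sym w_nadj.
rewrite [RHS](eq_bigr (fun z => w z y)) => [|z _]; last by rewrite w_sym.
apply: big_uniq_filter_eq; rewrite ?nbrs_uniq // => z.
apply/andP/andP => [[/hs hz ha]|[/mem_nbrs ha hl]].
  by split; [apply/mem_nbrs | lia].
by split=> //; apply/hs; case: (d_adj ha); lia.
Qed.

Lemma mS_recurrence (N W : R) :
  W != 0 -> (forall x, Deg w m x = N * W) ->
  (forall x, dminus w m x0 x = W * (d x)%:R) ->
  forall n, mS w m x0 n.+1 * n.+1%:R = mS w m x0 n * (N - n%:R).
Proof.
move=> W_neq0 Deg_NW dminus_Wd n.
have [sn Sn] := shell_enumerable n; have [sn1 Sn1] := shell_enumerable n.+1.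
apply: (mulIf W_neq0); rewrite (mS_shell Sn) (mS_shell Sn1) !mulr_suml.
transitivity (\sum_(z <- sn) \sum_(y <- sn1) w z y); last first.
  rewrite [LHS]big_seq [RHS]big_seq; apply: eq_bigr => z /Sn.2 hz.
  have up_z : \sum_(y <- nbrs z | ~~ (d y < d z)%N) w z y
             = m z * W * (N - (d z)%:R).
    have := sum_nbrs_Deg z; rewrite (bigID (fun y => (d y < d z)%N)) /=.
    rewrite sum_nbrs_dminus Deg_NW dminus_Wd => e.
    by apply: (addrI (m z * (W * (d z)%:R))); rewrite e; ring.
  have Sn1_z : enumerates sn1 (fun x => d x = (d z).+1) by rewrite hz.
  by rewrite -(sum_nbrs_up Sn1_z) up_z hz; ring.
rewrite exchange_big [LHS]big_seq [RHS]big_seq; apply: eq_bigr => y /Sn1.2 hy.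
have Sn_y : enumerates sn (fun x => (d x).+1 = d y).
  split=> [|x]; first exact: Sn.1.
  by rewrite hy; split=> [/(Sn.2 x) -> | [/(Sn.2 x)]].
by rewrite (sum_nbrs_down Sn_y) sum_nbrs_dminus dminus_Wd hy; ring.
Qed.

End Shells.

Theorem proposition2 (R : realFieldType) (V : countType)
  (w : V -> V -> R) (m : V -> R) (N W : R) (x0 : V) :
  weighted_graph w m -> locally_finite w ->
  0 < N -> 0 < W -> HSS w m N W x0 ->
  forall n : nat, mS w m x0 n = m x0 * gbinom N n.
Proof.
move=> [w_sym [w_ge0 [_ m_gt0]]] loc_fin _ W_gt0 [Deg_NW [[c c_proper] hd]].
have /all_sig [d dP] := fun x => constructive_indefinite_description _ (hd x).
have dist_d x : dist w x x0 (d x) := (dP x).1.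
have mS0 : mS w m x0 0 = m x0.
  by rewrite (mS_shell m dist_d (shell0 dist_d)) big_seq1.
rewrite -mS0; apply: gbinom_recurrence.
apply: (mS_recurrence w_sym w_ge0 m_gt0 c_proper loc_fin dist_d) => //.
- by rewrite gt_eqF.
- by move=> x; exact: (dP x).2.
Qed.
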